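(* Let $k$ be an odd positive integer. Then $$-\frac{3}{8k^3}\sum_{n=1}^{k-1}\cot\!\Big(\frac{2\pi n}{k}\Big)\cot\!\Big(\frac{\pi n}{k}\Big)\csc^2\!\Big(\frac{\pi n}{k}\Big)=-\frac{(k^2-1)(k^2-19)}{240k^3}.$$ *)

From Stdlib Require Import Reals List.
Open Scope R_scope.

Definition cot (x : R) : R := cos x / sin x.
Definition csc (x : R) : R := 1 / sin x.

(* finite sum  \sum_{n=a}^{b} f n  (empty if b < a) *)
Definition sum_range (a b : nat) (f : nat -> R) : R :=
  fold_right Rplus 0 (map f (seq a (S b - a))).

(* The identity [cot (2x) cot x csc^2 x = (cot^4 x - 1) / 2] reduces the sum to
   [\sum_(0 < n < k) cot^4 (n PI / k)].  Writing [sin (k t) = cos^k t * S_k (tan t)]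
   (legitimate because [cos (n PI / k) <> 0] for odd [k]), the [k] distinct numbers
   [0] and [tan (n PI / k)] are the roots of the degree [k] polynomial [S_k], so
   [S_k = k X \prod_n (1 - cot (n PI / k) X)].  The elementary symmetric functions of
   the cotangents are thus signed binomial coefficients read off [S_k], and Newton's
   identities give [\sum cot^4 = (k - 1)(k - 2)(k^2 + 3k - 13) / 45]. *)

From Stdlib Require Import Reals Lra Lia.
From Corelib Require Import ssreflect.
Open Scope R_scope.

Lemma cot_double_cot_csc2 x : sin x <> 0 -> cos x <> 0 ->
  cot (2 * x) * cot x * csc x ^ 2 = (cot x ^ 4 - 1) / 2.
Proof.
move=> hs hc; rewrite /cot /csc sin_2a cos_2a.
have pyth : sin x * sin x + cos x * cos x = 1 by have := sin2_cos2 x; rewrite /Rsqr.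
have -> : cos x * cos x - sin x * sin x
    = (cos x * cos x - sin x * sin x) * (sin x * sin x + cos x * cos x)
  by rewrite pyth Rmult_1_r.
by field.
Qed.

Definition pi_frac (k n : nat) : R := PI * INR n / INR k.

Lemma pi_frac_bounds k n : (1 <= n < k)%nat -> 0 < pi_frac k n < PI.
Proof.
move=> hn; rewrite /pi_frac.
have hn0 : 1 <= INR n by apply: (le_INR 1); lia.
have hnk : INR n < INR k by apply: lt_INR; lia.
have hpi := PI_RGT_0; split.
- by apply: Rdiv_lt_0_compat; nra.
- have -> : PI * INR n / INR k = PI - PI * (INR k - INR n) / INR k by field; lra.
  have : 0 < PI * (INR k - INR n) / INR k by apply: Rdiv_lt_0_compat; nra.
  lra.
Qed.

Lemma sin_pi_frac_neq0 k n : (1 <= n < k)%nat -> sin (pi_frac k n) <> 0.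
Proof.
move=> /pi_frac_bounds [h0 hpi]; have := sin_gt_0 _ h0 hpi; lra.
Qed.

(* [cos] vanishes only at odd multiples of [PI / 2], and [n / k] is never half an odd integer. *)
Lemma cos_pi_frac_neq0 k n : Nat.Odd k -> cos (pi_frac k n) <> 0.
Proof.
move=> hk /cos_eq_0_0 [z hz].
have k0 : 0 < INR k by case: hk => m ->; apply: lt_0_INR; lia.
have hpi := PI_RGT_0.
have E : 2 * INR n = (2 * IZR z + 1) * INR k.
{ apply: (Rmult_eq_reg_l (PI / INR k)); last by apply: Rgt_not_eq; apply: Rdiv_lt_0_compat.
  transitivity (2 * pi_frac k n); first by rewrite /pi_frac; field; lra.
  by rewrite hz; field; lra. }
move: E; rewrite !INR_IZR_INZ -!mult_IZR -plus_IZR -mult_IZR => /eq_IZR.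
by case: hk => m ->; lia.
Qed.

Lemma sin_mul_pi_frac k n : (0 < k)%nat -> sin (INR k * pi_frac k n) = 0.
Proof.
move=> k0; apply: sin_eq_0_1; exists (Z.of_nat n); rewrite -INR_IZR_INZ /pi_frac.
by field; apply: not_0_INR; lia.
Qed.

Lemma sin_sub_eq0 x y : 0 < x < PI -> 0 < y < PI -> sin (x - y) = 0 -> x = y.
Proof.
move=> hx hy hxy; case: (Rtotal_order x y) => [lt|[//|gt]].
- have := sin_gt_0 (y - x); rewrite -[y - x]Ropp_minus_distr sin_neg; lra.
- have := sin_gt_0 (x - y); lra.
Qed.

Lemma tan_pi_frac_inj k a b : Nat.Odd k -> (1 <= a < k)%nat -> (1 <= b < k)%nat ->
  sin (pi_frac k a) / cos (pi_frac k a) = sin (pi_frac k b) / cos (pi_frac k b) -> a = b.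
Proof.
move=> hk ha hb htan.
have ca := cos_pi_frac_neq0 k a hk; have cb := cos_pi_frac_neq0 k b hk.
have : sin (pi_frac k a - pi_frac k b) = 0.
{ rewrite sin_minus.
  have -> : sin (pi_frac k a) = sin (pi_frac k b) / cos (pi_frac k b) * cos (pi_frac k a).
  { by rewrite -htan; field. }
  by field. }
move/(sin_sub_eq0 _ _ (pi_frac_bounds k a ha) (pi_frac_bounds k b hb)).
rewrite /pi_frac => E; apply: INR_eq.
have k0 : 0 < INR k by apply: lt_0_INR; lia.
have hpi := PI_RGT_0.
apply: (Rmult_eq_reg_l (PI / INR k)); last by apply: Rgt_not_eq; apply: Rdiv_lt_0_compat.
have swap x : PI / INR k * x = PI * x / INR k by rewrite /Rdiv; ring.
by rewrite !swap.
Qed.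

From mathcomp Require Import all_boot all_algebra.
From mathcomp Require Import Rstruct.
From mathcomp Require Import ring zify.
Set Implicit Arguments.
Unset Strict Implicit.
Import GRing.Theory Num.Theory.

Section MultipleAnglePoly.
Local Open Scope ring_scope.
Variable F : numFieldType.

(* The pair [(S_n, C_n)] with [sin (n t) = cos t ^ n * S_n (tan t)] and
   [cos (n t) = cos t ^ n * C_n (tan t)]; the recursion is the addition formula. *)
Fixpoint multiple_angle_poly (n : nat) : {poly F} * {poly F} :=
  if n is m.+1 then
    ((multiple_angle_poly m).1 + 'X * (multiple_angle_poly m).2,
     (multiple_angle_poly m).2 - 'X * (multiple_angle_poly m).1)
  else (0, 1).

Lemma size_multiple_angle_poly n :
  (size (multiple_angle_poly n).1 <= n.+1)%N /\ (size (multiple_angle_poly n).2 <= n.+1)%N.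
Proof.
elim: n => [|n [IHs IHc]] /=; first by rewrite size_poly0 size_poly1.
have sizeXM (p : {poly F}) : (size p <= n.+1)%N -> (size ('X * p)%R <= n.+2)%N.
  by move=> hp; apply: leq_trans (size_polyMleq _ _) _; rewrite size_polyX.
split; apply: leq_trans (size_polyD _ _) _; rewrite ?size_polyN geq_max sizeXM ?andbT //.
- exact: leq_trans IHs _.
- exact: leq_trans IHc _.
Qed.

(* The first coefficients of [S_n] and [C_n] are those of [Im (1 + i X)^n] and
   [Re (1 + i X)^n], i.e. signed binomial coefficients. *)
Lemma multiple_angle_poly_coef n : let N := (n%:R : F) in
  let s := (multiple_angle_poly n).1 in let c := (multiple_angle_poly n).2 in
  (s`_0 = 0 /\ [/\ s`_1 = N, s`_2 = 0, s`_3 = - (N * (N - 1) * (N - 2)) / 6,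
      s`_4 = 0 & s`_5 = N * (N - 1) * (N - 2) * (N - 3) * (N - 4) / 120])
  /\ [/\ c`_0 = 1, c`_1 = 0, c`_2 = - (N * (N - 1)) / 2,
      c`_3 = 0 & c`_4 = N * (N - 1) * (N - 2) * (N - 3) / 24].
Proof.
elim: n => [|n [[s0 [s1 s2 s3 s4 s5]] [c0 c1 c2 c3 c4]]] /=.
  by rewrite !coefE /=; do !split; rewrite ?mul0r ?oppr0 ?mul0r.
rewrite !coefE /= s0 s1 s2 s3 s4 s5 c0 c1 c2 c3 c4 -natr1.
by do !split; field.
Qed.

Definition rev_roots_poly (ws : seq F) : {poly F} := \prod_(w <- ws) (1 - w *: 'X).

Definition power_sum (j : nat) (ws : seq F) : F := \sum_(w <- ws) w ^+ j.

Lemma rev_roots_poly_cons_coef w ws i :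
  (rev_roots_poly (w :: ws))`_i =
  (rev_roots_poly ws)`_i - (if i is j.+1 then w * (rev_roots_poly ws)`_j else 0).
Proof.
rewrite /rev_roots_poly big_cons mulrBl mul1r -scalerAl coefB coefZ coefXM.
by case: i => [|i] //=; rewrite mulr0.
Qed.

(* Newton's identities, in terms of the coefficients [(-1)^i e_i] of [rev_roots_poly]. *)
Lemma newton_identities ws : let e i := (rev_roots_poly ws)`_i in
  [/\ e 0%N = 1, power_sum 1 ws = - e 1%N,
      power_sum 2 ws = - e 1%N * power_sum 1 ws - 2 * e 2%N,
      power_sum 3 ws = - e 1%N * power_sum 2 ws - e 2%N * power_sum 1 ws - 3 * e 3%N &
      power_sum 4 ws = - e 1%N * power_sum 3 ws - e 2%N * power_sum 2 ws
                       - e 3%N * power_sum 1 ws - 4 * e 4%N].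
Proof.
elim: ws => [|w ws [e0 e1 e2 e3 e4]] /=.
  by rewrite /rev_roots_poly /power_sum !big_nil !coefE /=; split; ring.
rewrite !rev_roots_poly_cons_coef /power_sum !big_cons -!/(power_sum _ ws) e4 e3 e2 e1 e0.
by split; ring.
Qed.

Lemma prod_XsubC_rev_roots ys : 0 \notin ys ->
  \prod_(y <- ys) ('X - y%:P) =
  (\prod_(y <- ys) - y)%:P * rev_roots_poly (map GRing.inv ys).
Proof.
elim: ys => [|y ys IH]; first by rewrite /rev_roots_poly !big_nil polyC1 mulr1.
rewrite in_cons negb_or => /andP [y0 ys0].
rewrite /rev_roots_poly /= !big_cons -/(rev_roots_poly _) IH // polyCM.
have -> : 'X - y%:P = (- y)%:P * (1 - y^-1 *: 'X).
  rewrite mulrBr mulr1 mul_polyC scalerA mulNr divff 1?eq_sym //.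
  by rewrite scaleN1r polyCN opprK addrC.
ring.
Qed.

Lemma poly_rev_roots_factor (p : {poly F}) (ys : seq F) :
  all (root p) (0 :: ys) -> uniq (0 :: ys) -> (size p <= (size ys).+2)%N ->
  exists c, p = c *: ('X * rev_roots_poly (map GRing.inv ys)).
Proof.
move=> proots yuniq psize.
have [q pq] := uniq_roots_prod_XsubC proots (etrans (uniq_rootsE _) yuniq).
have size_prod : size (\prod_(z <- 0 :: ys) ('X - z%:P)) = (size ys).+2.
  by rewrite size_prod_XsubC.
have size_q : (size q <= 1)%N.
  have [->|q0] := eqVneq q 0; first by rewrite size_poly0.
  have prod0 : \prod_(z <- 0 :: ys) ('X - z%:P) != 0 by rewrite -size_poly_eq0 size_prod.
  by move: psize; rewrite pq size_mul // size_prod addnS /= -[(size ys).+2]add1n leq_add2r.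
move: yuniq pq => /= /andP [ys0 _]; rewrite (size1_polyC size_q) => ->.
exists (q`_0 * \prod_(y <- ys) - y).
by rewrite big_cons prod_XsubC_rev_roots // polyC0 subr0 -mul_polyC polyCM; ring.
Qed.

Lemma power_sum4_inv_multiple_angle_roots (k : nat) (ys : seq F) : (0 < k)%N ->
  all (root (multiple_angle_poly k).1) (0 :: ys) -> uniq (0 :: ys) -> size ys = k.-1 ->
  power_sum 4 (map GRing.inv ys) =
  (k%:R - 1) * (k%:R - 2) * (k%:R ^+ 2 + 3 * k%:R - 13) / 45.
Proof.
move=> k0 yroots yuniq ysize.
have ssize : (size (multiple_angle_poly k).1 <= (size ys).+2)%N.
  by rewrite ysize prednK //; exact: (size_multiple_angle_poly k).1.
have [c sfactor] := poly_rev_roots_factor yroots yuniq ssize.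
set ws := map GRing.inv ys in sfactor *.
have coef_s i : (multiple_angle_poly k).1`_i.+1 = c * (rev_roots_poly ws)`_i.
  by rewrite sfactor coefZ coefXM.
have [[_ [s1 s2 s3 s4 s5]] _] := multiple_angle_poly_coef k.
have [e0 p1 p2 p3 p4] := newton_identities ws.
have k0F : (k%:R : F) != 0 by rewrite pnatr_eq0 -lt0n.
have ck : c = k%:R by rewrite -s1 coef_s e0 mulr1.
have e_odd i : (multiple_angle_poly k).1`_i.+1 = 0 -> (rev_roots_poly ws)`_i = 0.
  by rewrite coef_s ck => /eqP; rewrite mulf_eq0 (negbTE k0F) => /eqP.
have e2 : (rev_roots_poly ws)`_2 = (multiple_angle_poly k).1`_3 / k%:R.
  by rewrite coef_s ck; field.
have e4 : (rev_roots_poly ws)`_4 = (multiple_angle_poly k).1`_5 / k%:R.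
  by rewrite coef_s ck; field.
by rewrite p4 p3 p2 p1 (e_odd 1%N s2) (e_odd 3%N s4) e2 e4 s3 s5; field.
Qed.

End MultipleAnglePoly.

Section TrigSums.
Local Open Scope ring_scope.

Lemma sin_cos_multiple_angle (t : R) (n : nat) : cos t <> 0%R ->
  sin (INR n * t) = cos t ^+ n * (multiple_angle_poly R n).1.[sin t / cos t] /\
  cos (INR n * t) = cos t ^+ n * (multiple_angle_poly R n).2.[sin t / cos t].
Proof.
move=> /eqP ct0; elim: n => [|n [IHs IHc]].
  by rewrite Rmult_0_l sin_0 cos_0 expr0 mul1r !hornerE.
rewrite S_INR Rmult_plus_distr_r Rmult_1_l sin_plus cos_plus IHs IHc /=.
by rewrite !hornerE !exprS ?RealsE; split; field.
Qed.

Lemma sum_rangeE a b f : sum_range a b f = \sum_(a <= n < b.+1) f n.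
Proof.
rewrite /sum_range /index_iota -[(S b - a)%coq_nat]/(b.+1 - a)%N.
move: (b.+1 - a)%N => m.
by elim: m a => [|m IH] a /=; rewrite ?big_nil ?big_cons ?IH.
Qed.

Lemma sum_cot4_pi_frac k : Nat.Odd k ->
  \sum_(1 <= n < k) cot (pi_frac k n) ^+ 4 =
  (k%:R - 1) * (k%:R - 2) * (k%:R ^+ 2 + 3 * k%:R - 13) / 45.
Proof.
move=> hk; have k0 : (0 < k)%N by case: hk => m ->; lia.
have bounds n : n \in index_iota 1 k -> (1 <= n /\ n < k)%coq_nat.
  by rewrite mem_iota => /andP [h1 h2]; lia.
set ys := map (fun n => sin (pi_frac k n) / cos (pi_frac k n)) (index_iota 1 k).
have -> : \sum_(1 <= n < k) cot (pi_frac k n) ^+ 4 = power_sum 4 (map GRing.inv ys).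
  by rewrite /power_sum /ys -map_comp big_map; apply: eq_bigr => n _ /=; rewrite invf_div.
apply: power_sum4_inv_multiple_angle_roots => //.
- have [[s0 _] _] := multiple_angle_poly_coef R k.
  rewrite /= /root horner_coef0 s0 eqxx /=.
  apply/allP => _ /mapP [n _ ->].
  have cn := cos_pi_frac_neq0 k n hk.
  have := sin_mul_pi_frac k n (ltac:(lia) : (0 < k)%coq_nat).
  rewrite (sin_cos_multiple_angle k cn).1 => /eqP.
  by rewrite mulf_eq0 expf_eq0 => /orP [/andP [_ /eqP]|].
- rewrite /= map_inj_in_uniq ?iota_uniq ?andbT; last first.
    by move=> a b ha hb; apply: tan_pi_frac_inj; auto.
  apply/mapP => [[n /bounds hn]] /esym/eqP; rewrite mulf_eq0 invr_eq0.
  by case/orP => /eqP; [exact: sin_pi_frac_neq0 | exact: cos_pi_frac_neq0].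
- by rewrite size_map size_iota subn1.
Qed.

Lemma sum_cot_double_cot_csc2_pi_frac k : Nat.Odd k ->
  \sum_(1 <= n < k) cot (2 * pi_frac k n) * cot (pi_frac k n) * csc (pi_frac k n) ^+ 2 =
  (k%:R ^+ 2 - 1) * (k%:R ^+ 2 - 19) / 90.
Proof.
move=> hk; have k0 : (0 < k)%N by case: hk => m ->; lia.
rewrite (eq_big_nat _ _ (F2 := fun n => (cot (pi_frac k n) ^+ 4 - 1) / 2)); last first.
  move=> n /andP [n1 nk]; have hn : (1 <= n /\ n < k)%coq_nat by lia.
  have := cot_double_cot_csc2 _ (sin_pi_frac_neq0 k n hn) (cos_pi_frac_neq0 k n hk).
  by rewrite !RealsE => ->.
rewrite -big_distrl /= sumrB sum_cot4_pi_frac // big_const_seq count_predT size_iota iter_addr_0.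
by rewrite subn1 -[k in k%:R]prednK // -natr1; field.
Qed.

End TrigSums.

Theorem mainTheorem7 (k : nat) (hk : Nat.Odd k) :
  - (3 / (8 * INR k ^ 3)) *
    sum_range 1 (k - 1) (fun n =>
      cot (2 * PI * INR n / INR k) * cot (PI * INR n / INR k)
      * (csc (PI * INR n / INR k)) ^ 2)
  = - ((INR k ^ 2 - 1) * (INR k ^ 2 - 19)) / (240 * INR k ^ 3).
Proof.
have k0 : (0 < k)%N by case: hk => m ->; lia.
rewrite sum_rangeE (_ : (k - 1).+1 = k); last by lia.
have kR : (k%:R != 0 :> R)%R by rewrite pnatr_eq0 -lt0n.
rewrite (eq_bigr (fun n => cot (2 * pi_frac k n) * cot (pi_frac k n) * csc (pi_frac k n) ^+ 2)%R).
  by rewrite sum_cot_double_cot_csc2_pi_frac // !RealsE /=; field.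
by move=> n _; rewrite /pi_frac RpowE; congr (cot _ * _ * _); rewrite !RealsE; ring.
Qed.
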